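(* Fix $D,\alpha,\theta>0$. There is a constant $C=C(D,\alpha,\theta)$ such that for every finite connected graph $G$ on $n$ vertices satisfying (bal), (mix), (esc) with parameters $D,\alpha,\theta$ (with $n$ sufficiently large), the following holds. Let $u$ be a $\pi$-distributed vertex and, given $u$, let $X,Y$ be two independent lazy random walks started at $u$. Then for every vertex $v$, $$\mathbb E\left[\,\left|\{(i,j):0\le i,j\le r,\ X_i=Y_j=v\}\right|\,\right]\le \frac{C}{n}.$$
   Context: For a finite connected graph $G=(V,E)$ with $n$ vertices, $d(v)$ is the degree of $v$, $\delta(G),\Delta(G)$ are the minimum and maximum degrees. The lazy random walk $(X_t)$ on $G$ at each step stays put with probability $1/2$ and otherwise moves along a uniformly chosen edge incident to the current vertex. Write $\mathbf p^t(u,v)=\Pr_u(X_t=v)$ and $\pi(v)=d(v)/(2|E|)$. The uniform mixing time is $t_{\mathrm{mix}}(G)=\min\{t\ge0:\max_{u,v\in V}|\mathbf p^t(u,v)/\pi(v)-1|\le 1/2\}$, and the bubble sum is $\mathcal B(G)=\sum_{t=0}^{t_{\mathrm{mix}}(G)}(t+1)\sup_{v}\mathbf p^t(v,v)$. Assumptions with parameters $D,\alpha,\theta>0$: (bal) $\Delta(G)/\delta(G)\le D$; (mix) $t_{\mathrm{mix}}(G)\le n^{1/2-\alpha}$; (esc) $\mathcal B(G)\le\theta$. The run time is $r=n^{1/2-\alpha/3}$ (rounded to an integer). *)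

From Stdlib Require Import Reals Lra Lia ZArith Arith List.
Open Scope R_scope.

(* A finite simple graph on vertex set {0,..,n-1}. *)
Record graph := Graph {
  gn : nat;
  adj : nat -> nat -> bool
}.

Definition simple_graph (G : graph) : Prop :=
  (forall u v, adj G u v = adj G v u) /\ (forall u, adj G u u = false) /\
  (forall u v, adj G u v = true -> (u < gn G)%nat /\ (v < gn G)%nat).

Inductive reach (G : graph) : nat -> nat -> Prop :=
| reach_refl : forall u, reach G u u
| reach_step : forall u w v, adj G u w = true -> reach G w v -> reach G u v.

Definition connected (G : graph) : Prop :=
  (0 < gn G)%nat /\ forall u v, (u < gn G)%nat -> (v < gn G)%nat -> reach G u v.

Fixpoint rsum (n : nat) (f : nat -> R) : R :=
  match n with O => 0 | S k => rsum k f + f k end.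

(* rmax n f = max (0, f 0, ..., f (n-1)) ; used for nonnegative quantities *)
Fixpoint rmax (n : nat) (f : nat -> R) : R :=
  match n with O => 0 | S k => Rmax (rmax k f) (f k) end.

Definition deg (G : graph) (v : nat) : R :=
  rsum (gn G) (fun w => if adj G v w then 1 else 0).

Definition twoE (G : graph) : R := rsum (gn G) (deg G).

Definition pi (G : graph) (v : nat) : R := deg G v / twoE G.

Definition P1 (G : graph) (u w : nat) : R :=
  (if Nat.eqb u w then /2 else 0) + (if adj G u w then /2 * / deg G u else 0).

Fixpoint pt (G : graph) (t : nat) (u v : nat) : R :=
  match t with
  | O => if Nat.eqb u v then 1 else 0
  | S s => rsum (gn G) (fun w => pt G s u w * P1 G w v)
  end.

Definition is_mixed (G : graph) (t : nat) : Prop :=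
  forall u v, (u < gn G)%nat -> (v < gn G)%nat ->
    Rabs (pt G t u v / pi G v - 1) <= /2.

Definition is_tmix (G : graph) (tm : nat) : Prop :=
  is_mixed G tm /\ forall s, (s < tm)%nat -> ~ is_mixed G s.

Definition bubble (G : graph) (tm : nat) : R :=
  rsum (S tm) (fun t => INR (S t) * rmax (gn G) (fun v => pt G t v v)).

Definition runtime (n : nat) (alpha : R) : nat :=
  Z.to_nat (Int_part (Rpower (INR n) (/2 - alpha / 3) + /2)).

(* E[ #{(i,j) : 0<=i,j<=r, X_i = Y_j = v} ] with u ~ pi, X,Y independent
   lazy walks from u:  sum_u pi(u) sum_{i,j<=r} p^i(u,v) p^j(u,v). *)
Definition expected_collisions (G : graph) (r v : nat) : R :=
  rsum (gn G) (fun u =>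
    rsum (S r) (fun i => rsum (S r) (fun j =>
      pi G u * (pt G i u v * pt G j u v)))).

(** By reversibility, [pi u * p^i(u,v) = pi v * p^i(v,u)], so by Chapman-Kolmogorov
    the expected number of collisions at [v] is [pi v * sum_(i,j <= r) p^(i+j)(v,v)].
    A time [t <= t_mix] occurs on the antidiagonal [i + j = t] at most [t + 1] times,
    so these terms are bounded by the bubble sum.  After [t_mix] the walk is mixed and
    [p^t(v,v) <= 3/2 pi v], while there are only [(r+1)^2 = O(n)] pairs [(i,j)].
    Balance gives [pi v <= D / n], hence the bound [D (theta + 11 D) / n]. *)

From Stdlib Require Import Reals Lra Lia ZArith.
Open Scope R_scope.

Lemma rsum_ext n f g : (forall k, (k < n)%nat -> f k = g k) -> rsum n f = rsum n g.
Proof.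
  induction n as [|n IH]; intros H; simpl; [reflexivity|].
  rewrite IH by (intros; apply H; lia). rewrite H by lia. reflexivity.
Qed.

Lemma rsum_le n f g : (forall k, (k < n)%nat -> f k <= g k) -> rsum n f <= rsum n g.
Proof.
  induction n as [|n IH]; intros H; simpl; [lra|].
  assert (rsum n f <= rsum n g) by (apply IH; intros; apply H; lia).
  assert (f n <= g n) by (apply H; lia).
  lra.
Qed.

Lemma rsum_add n f g : rsum n (fun k => f k + g k) = rsum n f + rsum n g.
Proof. induction n as [|n IH]; simpl; [|rewrite IH]; ring. Qed.

Lemma rsum_mult_l n c f : rsum n (fun k => c * f k) = c * rsum n f.
Proof. induction n as [|n IH]; simpl; [|rewrite IH]; ring. Qed.

Lemma rsum_const n c : rsum n (fun _ => c) = INR n * c.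
Proof. induction n as [|n IH]; simpl rsum; [simpl|rewrite IH, S_INR]; ring. Qed.

Lemma rsum_nonneg n f : (forall k, (k < n)%nat -> 0 <= f k) -> 0 <= rsum n f.
Proof.
  intros H. rewrite <- (Rmult_0_r (INR n)), <- rsum_const.
  apply rsum_le; auto.
Qed.

Lemma rsum_comm n m F :
  rsum n (fun i => rsum m (fun j => F i j)) = rsum m (fun j => rsum n (fun i => F i j)).
Proof.
  induction n as [|n IH]; simpl.
  - rewrite rsum_const; ring.
  - rewrite IH, <- rsum_add; reflexivity.
Qed.

Lemma rsum_ge_term n f k :
  (forall i, (i < n)%nat -> 0 <= f i) -> (k < n)%nat -> f k <= rsum n f.
Proof.
  induction n as [|n IH]; intros H Hk; [lia|]. simpl.
  assert (0 <= rsum n f) by (apply rsum_nonneg; intros; apply H; lia).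
  destruct (Nat.eq_dec k n) as [->|Hkn]; [lra|].
  assert (f k <= rsum n f) by (apply IH; intros; try apply H; lia).
  assert (0 <= f n) by (apply H; lia).
  lra.
Qed.

Lemma rsum_eqb n b g :
  (b < n)%nat -> rsum n (fun u => if Nat.eqb u b then g u else 0) = g b.
Proof.
  intros Hb; induction n as [|n IH]; [lia|]. simpl.
  destruct (Nat.eqb_spec n b) as [->|Hnb].
  - rewrite (rsum_ext _ _ (fun _ => 0)), rsum_const; [ring|].
    intros k Hk; destruct (Nat.eqb_spec k b); [lia|reflexivity].
  - rewrite IH by lia; ring.
Qed.

Lemma rsum_tail_zero m k f : (forall t, (m <= t)%nat -> f t = 0) -> rsum (m + k) f = rsum m f.
Proof.
  intros H; induction k as [|k IH]; [now rewrite Nat.add_0_r|].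
  rewrite Nat.add_succ_r; simpl. rewrite IH, H by lia; ring.
Qed.

Lemma rsum_le_add_length m k f : (forall t, 0 <= f t) -> rsum m f <= rsum (m + k) f.
Proof.
  intros H; induction k as [|k IH]; [rewrite Nat.add_0_r; lra|].
  rewrite Nat.add_succ_r; simpl. specialize (H (m + k)%nat); lra.
Qed.

Lemma rmax_ge n f k : (k < n)%nat -> f k <= rmax n f.
Proof.
  induction n as [|n IH]; intros Hk; [lia|]. simpl.
  destruct (Nat.eq_dec k n) as [->|Hkn]; [apply Rmax_r|].
  eapply Rle_trans; [apply IH; lia | apply Rmax_l].
Qed.

Lemma rmax_nonneg n f : 0 <= rmax n f.
Proof.
  induction n as [|n IH]; simpl; [lra|].
  eapply Rle_trans; [apply IH | apply Rmax_l].
Qed.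

Lemma rsum_shift h i b :
  rsum b (fun j => h (i + j)%nat) = rsum (i + b) (fun t => if Nat.leb i t then h t else 0).
Proof.
  induction b as [|b IH].
  - rewrite Nat.add_0_r, (rsum_ext i _ (fun _ => 0)), rsum_const; [simpl; ring|].
    intros k Hk; destruct (Nat.leb_spec i k); [lia|reflexivity].
  - rewrite Nat.add_succ_r; simpl. rewrite IH.
    destruct (Nat.leb_spec i (i + b)); [reflexivity|lia].
Qed.

Lemma rsum_count_le a t : rsum a (fun i => if Nat.leb i t then 1 else 0) = INR (Nat.min a (S t)).
Proof.
  induction a as [|a IH]; simpl rsum; [reflexivity|]. rewrite IH.
  destruct (Nat.leb_spec a t).
  - replace (Nat.min (S a) (S t)) with (S a) by lia.
    replace (Nat.min a (S t)) with a by lia.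
    rewrite S_INR; ring.
  - replace (Nat.min (S a) (S t)) with (Nat.min a (S t)) by lia; ring.
Qed.

Lemma rsum_antidiagonal_le h a b K :
  (forall t, 0 <= h t) -> (a + b <= K)%nat ->
  rsum a (fun i => rsum b (fun j => h (i + j)%nat)) <= rsum K (fun t => INR (S t) * h t).
Proof.
  intros Hh HK.
  apply Rle_trans with (rsum a (fun i => rsum K (fun t => if Nat.leb i t then h t else 0))).
  - apply rsum_le; intros i Hi. rewrite rsum_shift.
    replace K with ((i + b) + (K - (i + b)))%nat by lia.
    apply rsum_le_add_length; intros t; destruct Nat.leb; auto; lra.
  - rewrite rsum_comm. apply rsum_le; intros t _.
    rewrite (rsum_ext _ _ (fun i => h t * (if Nat.leb i t then 1 else 0)))
      by (intros; destruct Nat.leb; ring).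
    rewrite rsum_mult_l, rsum_count_le, Rmult_comm.
    apply Rmult_le_compat_r; [apply Hh|]. apply le_INR; lia.
Qed.

Lemma rsum_antidiagonal_split f M tm a c :
  (forall t, 0 <= M t) -> 0 <= c ->
  (forall t, (t <= tm)%nat -> f t <= M t) -> (forall t, (tm < t)%nat -> f t <= c) ->
  rsum a (fun i => rsum a (fun j => f (i + j)%nat))
  <= rsum (S tm) (fun t => INR (S t) * M t) + INR a * INR a * c.
Proof.
  intros HM Hc Hearly Hlate.
  set (h := fun t => if Nat.leb t tm then M t else 0).
  assert (Hh : forall t, 0 <= h t) by (intros; unfold h; destruct Nat.leb; auto; lra).
  apply Rle_trans with (rsum a (fun i => rsum a (fun j => h (i + j)%nat + c))).
  { apply rsum_le; intros i _; apply rsum_le; intros j _. unfold h.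
    destruct (Nat.leb_spec (i + j) tm).
    - specialize (Hearly (i + j)%nat ltac:(assumption)); lra.
    - specialize (Hlate (i + j)%nat ltac:(assumption)); lra. }
  rewrite (rsum_ext _ _ (fun i => rsum a (fun j => h (i + j)%nat) + INR a * c))
    by (intros; rewrite rsum_add, rsum_const; reflexivity).
  rewrite rsum_add, rsum_const.
  assert (Htrunc : rsum (S tm + (a + a)) (fun t => INR (S t) * h t)
                   = rsum (S tm) (fun t => INR (S t) * M t)).
  { rewrite rsum_tail_zero.
    - apply rsum_ext; intros t Ht. unfold h. destruct (Nat.leb_spec t tm); [reflexivity|lia].
    - intros t Ht. unfold h. destruct (Nat.leb_spec t tm); [lia|ring]. }
  rewrite <- Htrunc.
  pose proof (rsum_antidiagonal_le h a a (S tm + (a + a)) Hh ltac:(lia)).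
  lra.
Qed.

Lemma deg_nonneg G x : 0 <= deg G x.
Proof. apply rsum_nonneg; intros; destruct adj; lra. Qed.

Lemma deg_pos_of_adj G u w : adj G u w = true -> (w < gn G)%nat -> 0 < deg G u.
Proof.
  intros Huw Hw. unfold deg.
  apply Rlt_le_trans with (if adj G u w then 1 else 0); [rewrite Huw; lra|].
  apply (rsum_ge_term _ (fun w => if adj G u w then 1 else 0)); [|assumption].
  intros i _; destruct (adj G u i); lra.
Qed.

Lemma P1_nonneg G u w : 0 <= P1 G u w.
Proof.
  unfold P1.
  assert (0 <= /2 * / deg G u).
  { destruct (Req_dec (deg G u) 0) as [->|Hd]; [rewrite Rinv_0; lra|].
    pose proof (deg_nonneg G u).
    assert (0 < / deg G u) by (apply Rinv_0_lt_compat; lra). lra. }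
  destruct Nat.eqb, adj; lra.
Qed.

Lemma pt_nonneg G t u v : 0 <= pt G t u v.
Proof.
  revert v; induction t as [|t IH]; intros v; simpl; [destruct Nat.eqb; lra|].
  apply rsum_nonneg; intros; apply Rmult_le_pos; auto using P1_nonneg.
Qed.

Lemma pt_add G i j a b :
  (b < gn G)%nat -> rsum (gn G) (fun u => pt G i a u * pt G j u b) = pt G (i + j) a b.
Proof.
  revert b; induction j as [|j IH]; intros b Hb.
  - rewrite Nat.add_0_r; simpl.
    rewrite <- (rsum_eqb (gn G) b (pt G i a)) by assumption.
    apply rsum_ext; intros; destruct Nat.eqb; ring.
  - rewrite Nat.add_succ_r; simpl.
    rewrite (rsum_ext _ _ (fun u => rsum (gn G) (fun w => pt G i a u * pt G j u w * P1 G w b)))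
      by (intros; rewrite <- rsum_mult_l; apply rsum_ext; intros; ring).
    rewrite rsum_comm. apply rsum_ext; intros w Hw.
    rewrite <- (IH w Hw), Rmult_comm, <- rsum_mult_l.
    apply rsum_ext; intros; ring.
Qed.

Lemma pt_1 G v w : (v < gn G)%nat -> pt G 1 v w = P1 G v w.
Proof.
  intros Hv; simpl.
  rewrite <- (rsum_eqb (gn G) v (fun u => P1 G u w)) by assumption.
  apply rsum_ext; intros k _. rewrite Nat.eqb_sym; destruct Nat.eqb; ring.
Qed.

Lemma P1_row_sum G x : (x < gn G)%nat -> 0 < deg G x -> rsum (gn G) (P1 G x) = 1.
Proof.
  intros Hx Hd. unfold P1. rewrite rsum_add.
  rewrite (rsum_ext _ _ (fun w => if Nat.eqb w x then /2 else 0))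
    by (intros; rewrite Nat.eqb_sym; reflexivity).
  rewrite rsum_eqb by assumption.
  rewrite (rsum_ext _ _ (fun w => (/2 * / deg G x) * (if adj G x w then 1 else 0)))
    by (intros; destruct adj; ring).
  rewrite rsum_mult_l. fold (deg G x). field. lra.
Qed.

Lemma pt_row_sum G s a :
  (forall x, (x < gn G)%nat -> 0 < deg G x) -> (a < gn G)%nat -> rsum (gn G) (pt G s a) = 1.
Proof.
  intros Hdeg Ha. induction s as [|s IH]; simpl.
  - rewrite (rsum_ext _ _ (fun w => if Nat.eqb w a then 1 else 0))
      by (intros; rewrite Nat.eqb_sym; reflexivity).
    apply rsum_eqb; assumption.
  - rewrite rsum_comm, <- IH. apply rsum_ext; intros x Hx.
    rewrite rsum_mult_l, P1_row_sum by auto; ring.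
Qed.

Lemma deg_P1_sym G w v : simple_graph G -> deg G w * P1 G w v = deg G v * P1 G v w.
Proof.
  intros [Hsym [_ Hbound]]. unfold P1.
  rewrite (Hsym w v), (Nat.eqb_sym w v).
  destruct (Nat.eqb_spec v w) as [->|Hvw]; [reflexivity|].
  destruct (adj G v w) eqn:Hvw_adj; [|ring].
  assert (Hwv_adj : adj G w v = true) by (rewrite Hsym; assumption).
  pose proof (deg_pos_of_adj G v w Hvw_adj (proj2 (Hbound _ _ Hvw_adj))).
  pose proof (deg_pos_of_adj G w v Hwv_adj (proj2 (Hbound _ _ Hwv_adj))).
  field; lra.
Qed.

Lemma deg_pt_sym G t u v :
  simple_graph G -> (u < gn G)%nat -> (v < gn G)%nat ->
  deg G u * pt G t u v = deg G v * pt G t v u.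
Proof.
  intros Hs; revert u v; induction t as [|t IH]; intros u v Hu Hv.
  - simpl. rewrite (Nat.eqb_sym v u). destruct (Nat.eqb_spec u v) as [->|]; ring.
  - change (pt G (S t) u v) with (rsum (gn G) (fun w => pt G t u w * P1 G w v)).
    change (pt G (S t) v u) with (pt G (1 + t) v u).
    rewrite <- rsum_mult_l, <- (pt_add G 1 t v u) by assumption.
    rewrite <- rsum_mult_l. apply rsum_ext; intros w Hw.
    rewrite pt_1 by assumption.
    transitivity ((deg G u * pt G t u w) * P1 G w v); [ring|].
    rewrite IH by assumption.
    transitivity (pt G t w u * (deg G w * P1 G w v)); [ring|].
    rewrite deg_P1_sym by assumption; ring.
Qed.

Lemma pi_pt_sym G t u v :
  simple_graph G -> (u < gn G)%nat -> (v < gn G)%nat ->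
  pi G u * pt G t u v = pi G v * pt G t v u.
Proof.
  intros Hs Hu Hv. unfold pi, Rdiv.
  transitivity ((deg G u * pt G t u v) * / twoE G); [ring|].
  rewrite deg_pt_sym by assumption; ring.
Qed.

Lemma pi_nonneg G v : 0 <= pi G v.
Proof.
  unfold pi, Rdiv. apply Rmult_le_pos; [apply deg_nonneg|].
  assert (0 <= twoE G) by (apply rsum_nonneg; intros; apply deg_nonneg).
  destruct (Req_dec (twoE G) 0) as [->|]; [rewrite Rinv_0; lra|].
  left; apply Rinv_0_lt_compat; lra.
Qed.

(* For [q = 0] the hypothesis is false, since then [p / q = 0]. *)
Lemma le_of_Rabs_div_sub_1 p q : 0 <= q -> Rabs (p / q - 1) <= /2 -> p <= 3/2 * q.
Proof.
  intros Hq H. destruct (Req_dec q 0) as [->|Hq0].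
  - unfold Rdiv in H. rewrite Rinv_0, Rmult_0_r, Rminus_0_l, Rabs_Ropp, Rabs_R1 in H. lra.
  - pose proof (Rle_abs (p / q - 1)).
    replace p with (p / q * q) by (field; assumption).
    apply Rmult_le_compat_r; lra.
Qed.

Lemma pt_le_of_mixed G tm t u v :
  (forall x, (x < gn G)%nat -> 0 < deg G x) -> is_mixed G tm -> (tm <= t)%nat ->
  (u < gn G)%nat -> (v < gn G)%nat -> pt G t u v <= 3/2 * pi G v.
Proof.
  intros Hdeg Hmix Ht Hu Hv.
  replace t with ((t - tm) + tm)%nat by lia. rewrite <- pt_add by assumption.
  apply Rle_trans with (rsum (gn G) (fun w => 3/2 * pi G v * pt G (t - tm) u w)).
  - apply rsum_le; intros w Hw. rewrite Rmult_comm.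
    apply Rmult_le_compat_r; [apply pt_nonneg|].
    apply le_of_Rabs_div_sub_1; [apply pi_nonneg | auto].
  - rewrite rsum_mult_l, pt_row_sum by assumption; lra.
Qed.

Lemma pt_diag_sum_le G tm a v :
  (forall x, (x < gn G)%nat -> 0 < deg G x) -> is_mixed G tm -> (v < gn G)%nat ->
  rsum a (fun i => rsum a (fun j => pt G (i + j) v v))
  <= bubble G tm + INR a * INR a * (3/2 * pi G v).
Proof.
  intros Hdeg Hmix Hv.
  apply (rsum_antidiagonal_split (fun t => pt G t v v)
           (fun t => rmax (gn G) (fun w => pt G t w w))).
  - intros; apply rmax_nonneg.
  - pose proof (pi_nonneg G v); lra.
  - intros t _. apply (rmax_ge (gn G) (fun w => pt G t w w)); assumption.
  - intros t Ht. apply (pt_le_of_mixed G tm); auto; lia.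
Qed.

Lemma connected_deg_pos G x :
  simple_graph G -> connected G -> (2 <= gn G)%nat -> (x < gn G)%nat -> 0 < deg G x.
Proof.
  intros [_ [_ Hbound]] [_ Hreach] Hn Hx.
  set (y := if Nat.eqb x 0 then 1%nat else 0%nat).
  assert (Hy : (y < gn G)%nat) by (unfold y; destruct (Nat.eqb_spec x 0); lia).
  assert (Hxy : x <> y) by (unfold y; destruct (Nat.eqb_spec x 0); lia).
  pose proof (Hreach x y Hx Hy) as Hxy_reach.
  inversion Hxy_reach as [|x' w y' Hadj]; [congruence|]; subst.
  exact (deg_pos_of_adj G x w Hadj (proj2 (Hbound _ _ Hadj))).
Qed.

Lemma pi_le_balanced G D v :
  0 < D -> (forall u w, (u < gn G)%nat -> (w < gn G)%nat -> deg G u <= D * deg G w) ->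
  (v < gn G)%nat -> 0 < deg G v -> pi G v <= D / INR (gn G).
Proof.
  intros HD Hbal Hv Hdv.
  assert (Hn : 0 < INR (gn G)) by (apply lt_0_INR; lia).
  assert (HE : INR (gn G) * (deg G v / D) <= twoE G).
  { unfold twoE. rewrite <- rsum_const. apply rsum_le; intros w Hw.
    apply Rmult_le_reg_l with D; [assumption|].
    specialize (Hbal v w Hv Hw). field_simplify; lra. }
  assert (HE0 : 0 < INR (gn G) * (deg G v / D))
    by (apply Rmult_lt_0_compat; [|apply Rdiv_lt_0_compat]; assumption).
  unfold pi, Rdiv.
  apply Rle_trans with (deg G v * / (INR (gn G) * (deg G v / D))).
  - apply Rmult_le_compat_l; [lra|]. apply Rinv_le_contravar; assumption.
  - right; field; lra.
Qed.

Lemma expected_collisions_reverse G r v :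
  simple_graph G -> (v < gn G)%nat ->
  expected_collisions G r v
  = pi G v * rsum (S r) (fun i => rsum (S r) (fun j => pt G (i + j) v v)).
Proof.
  intros Hs Hv. unfold expected_collisions.
  rewrite (rsum_ext _ _ (fun u => rsum (S r) (fun i => rsum (S r) (fun j =>
             pi G v * (pt G i v u * pt G j u v))))).
  - rewrite rsum_comm, <- rsum_mult_l. apply rsum_ext; intros i _.
    rewrite rsum_comm, <- rsum_mult_l. apply rsum_ext; intros j _.
    rewrite rsum_mult_l, pt_add by assumption; reflexivity.
  - intros u Hu. apply rsum_ext; intros i _; apply rsum_ext; intros j _.
    transitivity ((pi G u * pt G i u v) * pt G j u v); [ring|].
    rewrite pi_pt_sym by assumption; ring.
Qed.

Lemma runtime_succ_sq_le n alpha :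
  (1 <= n)%nat -> 0 <= alpha ->
  INR (S (runtime n alpha)) * INR (S (runtime n alpha)) <= 7 * INR n.
Proof.
  intros Hn Ha. assert (Hn1 : 1 <= INR n) by (apply (le_INR 1); assumption).
  unfold runtime. set (x := Rpower (INR n) (/2 - alpha / 3)).
  assert (Hx0 : 0 < x) by (unfold x, Rpower; apply exp_pos).
  assert (Hx2 : x * x <= INR n).
  { unfold x. rewrite <- Rpower_plus. rewrite <- (Rpower_1 (INR n)) at 2 by lra.
    apply Rle_Rpower; lra. }
  assert (Hr : INR (Z.to_nat (Int_part (x + /2))) <= x + /2).
  { destruct (base_Int_part (x + /2)) as [Hfloor _].
    destruct (Int_part (x + /2)) as [|p|p].
    - simpl; lra.
    - rewrite INR_IZR_INZ, Z2Nat.id by lia; assumption.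
    - rewrite Z2Nat.inj_neg; simpl; lra. }
  rewrite S_INR. set (r := INR (Z.to_nat (Int_part (x + /2)))) in *.
  assert (0 <= r) by apply pos_INR.
  assert (3 * x <= 3/2 * (x * x + 1)) by (pose proof (Rle_0_sqr (x - 1)); unfold Rsqr in *; nra).
  nra.
Qed.

Theorem mainTheorem5 (D alpha theta : R) (hD : 0 < D) (halpha : 0 < alpha)
  (htheta : 0 < theta) :
  exists C : R, exists N : nat, forall G : graph,
    (N <= gn G)%nat ->
    simple_graph G -> connected G ->
    (* (bal) Delta(G)/delta(G) <= D *)
    (forall u w, (u < gn G)%nat -> (w < gn G)%nat -> deg G u <= D * deg G w) ->
    (* (mix) and (esc) *)
    (exists tm, is_tmix G tm /\
       INR tm <= Rpower (INR (gn G)) (/2 - alpha) /\ bubble G tm <= theta) ->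
    forall v, (v < gn G)%nat ->
      expected_collisions G (runtime (gn G) alpha) v <= C / INR (gn G).
Proof.
  exists (D * (theta + 11 * D)), 2%nat.
  intros G Hn Hs Hc Hbal [tm [[Hmix _] [_ Hbubble]]] v Hv.
  assert (Hdeg : forall x, (x < gn G)%nat -> 0 < deg G x)
    by (intros; apply connected_deg_pos; assumption).
  assert (Hpi : pi G v <= D / INR (gn G)) by (apply pi_le_balanced; auto).
  pose proof (pi_nonneg G v) as Hpi0.
  rewrite expected_collisions_reverse by assumption.
  pose proof (runtime_succ_sq_le (gn G) alpha ltac:(lia) ltac:(lra)) as Hr.
  set (a := S (runtime (gn G) alpha)) in *.
  pose proof (pt_diag_sum_le G tm a v Hdeg Hmix Hv) as Hsum.
  assert (HnR : 0 < INR (gn G)) by (apply lt_0_INR; lia).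
  set (q := D / INR (gn G)) in *.
  replace (D * (theta + 11 * D) / INR (gn G)) with (q * theta + 11 * INR (gn G) * q * q)
    by (unfold q; field; lra).
  set (A := INR a * INR a) in *.
  assert (HA : 0 <= A) by (unfold A; apply Rle_0_sqr).
  assert (Hpp : pi G v * pi G v <= q * q) by (apply Rmult_le_compat; lra).
  assert (HApp : A * (pi G v * pi G v) <= 7 * INR (gn G) * (q * q))
    by (apply Rmult_le_compat; nra).
  apply Rle_trans with (pi G v * (theta + A * (3/2 * pi G v))); [apply Rmult_le_compat_l; lra|].
  assert (pi G v * theta <= q * theta) by (apply Rmult_le_compat_r; lra).
  nra.
Qed.
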